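(* Let $\alpha_1,\dots,\alpha_m\in\mathbb C$ be distinct. For $i=1,\dots,n$ define the $B_n$-valued functions $$A_i=\sum_{k=1}^m\frac{Y_{i,k}}{z_i-\alpha_k}-\sum_{p\ne i}\frac{\nu s_{ip}}{z_i-z_p}.$$ Then the connection $\nabla$ on the trivial bundle with fiber $B_n$ given by the KZ system $\partial F/\partial z_i=A_iF$ ($i=1,\dots,n$) is flat, i.e. $\partial_iA_j-\partial_jA_i+[A_i,A_j]=0$ for all $i,j$.
   Context: $D$ is a star-shaped graph with $m$ legs, $d_k$ vertices in the $k$-th leg (including the node). $B_n$ is the $\mathbb C[\gamma,\nu]$-algebra ($\gamma=(\gamma_{kj})$) generated by $S_n$ (transpositions $s_{ij}$) and $Y_{i,k}$ ($1\le i\le n$, $1\le k\le m$) with relations, for $i\ne j$: $s_{ij}Y_{i,k}=Y_{j,k}s_{ij}$; $s_{ij}Y_{h,k}=Y_{h,k}s_{ij}$ for $h\ne i,j$; $\prod_{j=1}^{d_k}(Y_{i,k}-\gamma_{kj})=0$; $\sum_kY_{i,k}=\nu\sum_{j\ne i}s_{ij}$; $[Y_{i,k},Y_{j,k}]=\nu(Y_{i,k}-Y_{j,k})s_{ij}$; $[Y_{i,k},Y_{j,l}]=0$ for $k\ne l$. The functions $A_i$ are defined on the complement in $\mathbb C^n$ of the hyperplanes $z_i=z_p$ and $z_i=\alpha_k$. *)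

From HB Require Import structures.
From mathcomp Require Import all_boot all_order all_algebra all_fingroup.
From mathcomp Require Import complex.
From mathcomp Require Import all_classical all_reals all_analysis.
Set Implicit Arguments. Unset Strict Implicit. Unset Printing Implicit Defensive.
Import Order.TTheory GRing.Theory Num.Theory.
Import numFieldNormedType.Exports.
Local Open Scope ring_scope.
Local Open Scope complex_scope.

Definition updz (C : Type) (n : nat) (z : 'I_n -> C) (i : 'I_n) (w : C) : 'I_n -> C :=
  fun p => if p == i then w else z p.

Definition Cplx (R : realType) : numClosedFieldType := R[i].

Section PDeriv.
Variable R : realType.
Local Notation C := (Cplx R).
Variable n : nat.

Definition pderivable (f : ('I_n -> C) -> C) (i : 'I_n) (z : 'I_n -> C) : Prop :=
  derivable (fun w : C => f (updz z i w)) (z i) 1.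

Definition pderiv (f : ('I_n -> C) -> C) (i : 'I_n) (z : 'I_n -> C) : C :=
  derive1 (fun w : C => f (updz z i w)) (z i).

(* For a C-module V (possibly infinite dimensional), G : C^n -> V is the
   partial derivative d/dz_i of F : C^n -> V on the (open) set U: on U,
   F is a finite C-linear combination sum_c f_c(z) b_c of fixed vectors b_c
   with coefficients f_c differentiable in z_i, and G = sum_c (d f_c/dz_i) b_c. *)
Definition is_pderiv (V : lmodType C) (U : set ('I_n -> C)) (i : 'I_n)
    (F G : ('I_n -> C) -> V) : Prop :=
  exists (N : nat) (f : 'I_N -> ('I_n -> C) -> C) (b : 'I_N -> V),
    forall z, U z ->
      [/\ forall c, pderivable (f c) i z,
          F z = \sum_(c < N) f c z *: b c
        & G z = \sum_(c < N) pderiv (f c) i z *: b c].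
End PDeriv.

(* Flatness splits into two identities.  For i <> j the variable z_i enters A_j
   only through -nu s_ij / (z_j - z_i), so d_i A_j = -nu s_ij / (z_i - z_j)^2 is
   symmetric in i and j.  Writing A_i = P_i - nu S_i with
   P_i = sum_k Y_ik / (z_i - alpha_k) and S_i = sum_p s_ip / (z_i - z_p), the
   relations of B_n turn [A_i, A_j] into a combination of the elements
   nu (Y_ik - Y_jk) s_ij and of differences of the two 3-cycles of {i, j, k};
   every coefficient is an instance of the partial fraction identity
   1/((x-t)(y-t)) = (1/(y-t) - 1/(x-t))/(x-y) and vanishes.
   As B may be infinite dimensional, a partial derivative is a derivative of a
   finite combination of fixed vectors; it is well defined on the domain because
   a finite combination vanishing near a point has vanishing derivative: using a
   linear relation to eliminate one vector reduces the number of vectors, and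
   for independent vectors the coefficients themselves vanish near the point. *)

From HB Require Import structures.
From mathcomp Require Import all_boot all_order all_algebra all_fingroup.
From mathcomp Require Import complex.
From mathcomp Require Import all_classical all_reals all_analysis.
From mathcomp Require Import ring.
Import Order.TTheory GRing.Theory Num.Theory.
Import numFieldNormedType.Exports.
Local Open Scope ring_scope.
Local Open Scope complex_scope.

Section Transpositions.
Variable T : finType.
Implicit Types i j k a b c d : T.

Lemma tpermMC a b c d :
  (tperm a b * tperm c d = tperm c d * tperm (tperm c d a) (tperm c d b))%g.
Proof. by rewrite conjgC tpermJ. Qed.

Lemma tperm_disjointC a b c d : c != a -> d != a -> c != b -> d != b ->
  (tperm a b * tperm c d = tperm c d * tperm a b)%g.
Proof. by move=> ca da cb db; rewrite tpermMC !tpermD. Qed.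

Lemma tpermM_cycle3 i j k : i != j -> j != k -> i != k ->
  [/\ (tperm i k * tperm i j = tperm i j * tperm j k)%g,
      (tperm j k * tperm i k = tperm i j * tperm j k)%g,
      (tperm i j * tperm i k = tperm j k * tperm i j)%g
    & (tperm i k * tperm j k = tperm j k * tperm i j)%g].
Proof.
move=> ij jk ik; split.
- by rewrite tpermMC tpermL tpermD.
- by rewrite [RHS]tpermMC tpermL tpermD // eq_sym.
- by rewrite [RHS]tpermMC tpermR tpermD.
- by rewrite tpermMC tpermR tpermD // eq_sym.
Qed.

End Transpositions.
Arguments tpermM_cycle3 {T i j k}.

Lemma partial_fraction (F : fieldType) (x y t : F) : x != y -> x != t -> y != t ->
  (x - t)^-1 * (y - t)^-1 = (x - y)^-1 * ((y - t)^-1 - (x - t)^-1).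
Proof. by move=> xy xt yt; field; rewrite !subr_eq0 xy xt yt. Qed.
Arguments partial_fraction {F x y t}.

Section Bracket.
Variable A : pzRingType.
Implicit Types x y t c : A.

Definition bracket x y := x * y - y * x.

Lemma bracketxx x : bracket x x = 0.
Proof. exact: subrr. Qed.

Lemma bracketBl x y t : bracket (x - y) t = bracket x t - bracket y t.
Proof.
by rewrite /bracket mulrBl mulrBr !opprB addrACA [RHS]addrACA [- (t * x) + _]addrC.
Qed.

Lemma bracketBr x y t : bracket t (x - y) = bracket t x - bracket t y.
Proof.
by rewrite /bracket mulrBl mulrBr !opprB addrACA [RHS]addrACA [- (x * t) + _]addrC.
Qed.

Lemma bracket_suml I (r : seq I) (P : pred I) (F : I -> A) y :
  bracket (\sum_(i <- r | P i) F i) y = \sum_(i <- r | P i) bracket (F i) y.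
Proof. by rewrite /bracket mulr_suml mulr_sumr -sumrB. Qed.

Lemma bracket_sumr I (r : seq I) (P : pred I) (F : I -> A) y :
  bracket y (\sum_(i <- r | P i) F i) = \sum_(i <- r | P i) bracket y (F i).
Proof. by rewrite /bracket mulr_suml mulr_sumr -sumrB. Qed.

Lemma bracketC x y : bracket x y = - bracket y x.
Proof. by rewrite /bracket opprB. Qed.

Lemma bracket_centrall c x y : (forall t, c * t = t * c) ->
  bracket (c * x) y = c * bracket x y.
Proof. by move=> cC; rewrite /bracket mulrBr !mulrA (cC y). Qed.

Lemma bracket_centralr c x y : (forall t, c * t = t * c) ->
  bracket x (c * y) = c * bracket x y.
Proof. by move=> cC; rewrite /bracket mulrBr !mulrA (cC x). Qed.

End Bracket.
Arguments bracket {A}.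

Section BracketScale.
Variables (K : comPzRingType) (A : algType K).

Lemma bracketZl (a : K) (x y : A) : bracket (a *: x) y = a *: bracket x y.
Proof. by rewrite /bracket -scalerAl -scalerAr scalerBr. Qed.

Lemma bracketZr (a : K) (x y : A) : bracket x (a *: y) = a *: bracket x y.
Proof. by rewrite /bracket -scalerAl -scalerAr scalerBr. Qed.

End BracketScale.

Lemma sum_split_ord (V : nmodType) m n (F : 'I_m + 'I_n -> V) :
  \sum_(c < m + n) F (fintype.split c) =
    \sum_(c < m) F (inl c) + \sum_(c < n) F (inr c).
Proof.
rewrite big_split_ord; congr (_ + _); apply: eq_bigr => c _.
  by rewrite (unsplitK (inl _)).
by rewrite (unsplitK (inr _)).
Qed.
Arguments sum_split_ord {V m n}.

Section LinearCombinations.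
Variables (K : numFieldType) (V : lmodType K).

Lemma sumZ_elim N (e : 'I_N.+1 -> V) (a : 'I_N.+1 -> K) c0 :
  \sum_c a c *: e c = 0 -> a c0 != 0 -> forall x : 'I_N.+1 -> K,
  \sum_c x c *: e c =
    \sum_(c < N) (x (lift c0 c) - x c0 * (a (lift c0 c) / a c0)) *: e (lift c0 c).
Proof.
move=> rel a0 x.
have e0 : e c0 = - \sum_(c < N) (a (lift c0 c) / a c0) *: e (lift c0 c).
  apply: (scalerI a0); move/eqP: rel; rewrite (bigD1_ord c0) //= addr_eq0 => /eqP ->.
  rewrite scalerN scaler_sumr; congr -%R; apply: eq_bigr => c _.
  by rewrite scalerA mulrCA mulfV // mulr1.
rewrite (bigD1_ord c0) //= e0 scalerN scaler_sumr -sumrN -big_split /=.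
by apply: eq_bigr => c _; rewrite scalerA addrC scalerBl.
Qed.
Arguments sumZ_elim {N e a c0}.

Lemma derive1_lincomb_eq0 N (e : 'I_N -> V) (h : 'I_N -> K -> K) (w0 : K) :
  (forall c, derivable (h c) w0 1) ->
  (\forall w \near w0, \sum_c h c w *: e c = 0) ->
  \sum_c derive1 (h c) w0 *: e c = 0.
Proof.
elim: N e h => [|N IH] e h dh hw0; first by rewrite big_ord0.
have [[a [rel [c0 ac0]]]|free] := pselect (exists a : 'I_N.+1 -> K,
  \sum_c a c *: e c = 0 /\ exists c0, a c0 != 0); last first.
  apply: big1 => c _.
  rewrite derive1E (near_eq_derive (g := cst 0)) ?derive_cst ?scale0r //.
  apply: filterS hw0 => w hw; apply: contra_notP free => /eqP hc.
  by exists (h^~ w); split => //; exists c.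
pose lam c := a (lift c0 c) / a c0.
pose g c := h (lift c0 c) - lam c \o* h c0.
have dg c : derivable (g c) w0 1.
  by apply: derivableB => //; apply: derivableM.
rewrite (sumZ_elim rel ac0) -[RHS](IH (e \o lift c0) g dg).
  apply: eq_bigr => c _; rewrite !derive1E deriveB ?deriveMr //; first by rewrite mulrC.
  exact: derivableM.
by apply: filterS hw0 => w hw; rewrite -[RHS]hw (sumZ_elim rel ac0).
Qed.

End LinearCombinations.

Section PartialDerivativeUniqueness.
Variable R : realType.
Local Notation C := (Cplx R).
Variables (n : nat) (V : lmodType C) (U : set ('I_n -> C)) (i : 'I_n).
Hypothesis U_line : forall z, U z -> \forall w \near z i, U (updz z i w).

Lemma is_pderiv_uniq (F G1 G2 : ('I_n -> C) -> V) :
  is_pderiv U i F G1 -> is_pderiv U i F G2 -> forall z, U z -> G1 z = G2 z.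
Proof.
move=> [N1 [f1 [b1 h1]]] [N2 [f2 [b2 h2]]] z Uz.
have [df1 _ ->] := h1 z Uz; have [df2 _ ->] := h2 z Uz.
pose f u := match u with inl c => f1 c | inr c => f2 c end.
pose b u := match u with inl c => b1 c | inr c => - b2 c end.
have : \sum_(c < N1 + N2) pderiv (f (fintype.split c)) i z *: b (fintype.split c) = 0.
  apply: (@derive1_lincomb_eq0 _ _ _ _ (fun c w => f (fintype.split c) (updz z i w))).
    by move=> c; rewrite /f; case: fintype.split => c'; [exact: df1 | exact: df2].
  apply: filterS (U_line _ Uz) => w Uw.
  have [_ F1 _] := h1 _ Uw; have [_ F2 _] := h2 _ Uw.
  rewrite (sum_split_ord (fun u => f u (updz z i w) *: b u)) /=.
  by under [X in _ + X]eq_bigr do rewrite scalerN; rewrite sumrN -F1 -F2 subrr.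
rewrite (sum_split_ord (fun u => pderiv (f u) i z *: b u)) /=.
under [X in _ + X]eq_bigr do rewrite scalerN.
by rewrite sumrN => /eqP; rewrite subr_eq0 => /eqP.
Qed.

End PartialDerivativeUniqueness.
Arguments is_pderiv_uniq {R n V U i} U_line {F G1 G2}.

Lemma near_neq {K : numFieldType} {x c : K} : x != c -> \forall w \near x, w != c.
Proof.
move=> xc; apply/nbhs_ballP; exists `|x - c|; first by rewrite /= normr_gt0 subr_eq0.
by move=> y xy; apply: contraTneq xy => ->; rewrite /ball /= ltxx.
Qed.

Lemma updz_id (C : Type) (n : nat) (z : 'I_n -> C) (i : 'I_n) : updz z i (z i) = z.
Proof. by apply/funext => p; rewrite /updz; case: eqVneq => [->|]. Qed.

Lemma derivable_inv_sub (K : numFieldType) (g h : K -> K) (x : K) :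
  derivable g x 1 -> derivable h x 1 -> g x != h x ->
  derivable (fun w => (g w - h w)^-1) x 1.
Proof.
by move=> dg dh gh; apply: derivableV; [rewrite subr_eq0 | exact: derivableB].
Qed.

Lemma derive1_inv_sub (K : numFieldType) (c x : K) : c != x ->
  derive1 (fun w => (c - w)^-1) x = (c - x) ^- 2.
Proof.
move=> cx; have dsub : derivable (cst c - id) x 1.
  by apply: derivableB; [exact: derivable_cst | exact: derivable_id].
rewrite derive1E (deriveV (f := cst c - id)) ?subr_eq0 //.
by rewrite deriveB ?derive_cst ?derive_id // sub0r scalerN scaleNr opprK [_ *: 1]mulr1.
Qed.

Section KZCommutator.
Variable R : realType.
Local Notation C := (Cplx R).
Variables (B : algType C) (n m : nat) (nu : B) (sigma : {perm 'I_n} -> B)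
  (Y : 'I_n -> 'I_m -> B) (alpha : 'I_m -> C).
Local Notation s i j := (sigma (tperm i j)).

Hypothesis nu_central : forall x : B, nu * x = x * nu.
Hypothesis sigmaM : forall p q : {perm 'I_n}, sigma (p * q)%g = sigma p * sigma q.
Hypothesis s_Y_moved : forall (i j : 'I_n) k, i != j -> s i j * Y i k = Y j k * s i j.
Hypothesis s_Y_fixed : forall (i j h : 'I_n) k, i != j -> h != i -> h != j ->
  s i j * Y h k = Y h k * s i j.
Hypothesis Y_bracket_leg : forall (i j : 'I_n) k, i != j ->
  Y i k * Y j k - Y j k * Y i k = nu * (Y i k - Y j k) * s i j.
Hypothesis Y_commute_legs : forall (i j : 'I_n) (k l : 'I_m), i != j -> k != l ->
  Y i k * Y j l = Y j l * Y i k.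

Definition kz_A (i : 'I_n) (z : 'I_n -> C) : B :=
  \sum_(k < m) (z i - alpha k)^-1 *: Y i k
  - \sum_(p < n | p != i) (z i - z p)^-1 *: (nu * s i p).

Lemma bracket_Y_s i j k : i != j -> bracket (Y i k) (s i j) = (Y i k - Y j k) * s i j.
Proof. by move=> ij; rewrite /bracket s_Y_moved // mulrBl. Qed.

Lemma bracket_s_Y i j k : i != j -> bracket (s i j) (Y j k) = (Y i k - Y j k) * s i j.
Proof. by move=> ij; rewrite /bracket tpermC s_Y_moved 1?eq_sym // mulrBl. Qed.

Lemma bracket_Y_s_fixed h i j k : i != j -> h != i -> h != j ->
  bracket (Y h k) (s i j) = 0.
Proof. by move=> ij hi hj; rewrite /bracket s_Y_fixed // subrr. Qed.

Lemma bracket_s_s_disjoint i p j q : i != j -> i != q -> p != j -> p != q ->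
  bracket (s i p) (s j q) = 0.
Proof.
by move=> ij iq pj pq; rewrite /bracket -!sigmaM tperm_disjointC ?subrr // eq_sym.
Qed.

Section AtPoint.
Variable z : 'I_n -> C.
Hypothesis z_neq : forall i p : 'I_n, i != p -> z i != z p.
Hypothesis z_neq_alpha : forall i k, z i != alpha k.

Local Notation a i k := (z i - alpha k)^-1.
Local Notation w i p := (z i - z p)^-1.
Local Notation P i := (\sum_(k < m) a i k *: Y i k).
Local Notation S i := (\sum_(p < n | p != i) w i p *: s i p).
Local Notation D i j k := ((Y i k - Y j k) * s i j).

Lemma kz_A_split i : kz_A i z = P i - nu * S i.
Proof.
by rewrite /kz_A mulr_sumr; congr (_ - _); apply: eq_bigr => p _; rewrite scalerAr.
Qed.

Lemma bracket_P_P i j : i != j ->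
  bracket (P i) (P j) = \sum_k (a i k * a j k) *: (nu * D i j k).
Proof.
move=> ij; rewrite bracket_suml; apply: eq_bigr => k _.
rewrite bracket_sumr (bigD1 k) //= big1 ?addr0.
  rewrite bracketZl bracketZr scalerA /bracket Y_bracket_leg // mulrA.
  by congr (_ *: _).
move=> l lk; rewrite bracketZl bracketZr /bracket Y_commute_legs ?subrr ?scaler0 //.
by rewrite eq_sym.
Qed.

Lemma bracket_P_S i j : i != j ->
  bracket (P i) (S j) = \sum_k (a i k * w j i) *: D i j k.
Proof.
move=> ij; rewrite bracket_suml; apply: eq_bigr => k _.
rewrite bracket_sumr (bigD1 i ij) /= big1 ?addr0.
  by rewrite bracketZl bracketZr scalerA tpermC bracket_Y_s //; congr (_ *: _).
move=> p /andP[]; rewrite ![p == _]eq_sym => jp ip.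
by rewrite bracketZl bracketZr bracket_Y_s_fixed // !scaler0.
Qed.

Lemma bracket_S_P i j : i != j ->
  bracket (S i) (P j) = \sum_k (w i j * a j k) *: D i j k.
Proof.
move=> ij; rewrite bracket_suml (bigD1 j) /=; last by rewrite eq_sym.
rewrite [X in _ + X]big1 ?addr0.
  rewrite bracketZl bracket_sumr scaler_sumr; apply: eq_bigr => k _.
  by rewrite bracketZr scalerA bracket_s_Y //; congr (_ *: _).
move=> p /andP[]; rewrite ![p == _]eq_sym => ip jp.
rewrite bracketZl bracket_sumr big1 ?scaler0 // => k _.
by rewrite bracketZr bracketC bracket_Y_s_fixed ?oppr0 ?scaler0 // eq_sym.
Qed.

Lemma bracket_S_S i j : i != j -> bracket (S i) (S j) = 0.
Proof.
move=> ij.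
pose T p q := (w i p * w j q) *: bracket (s i p) (s j q).
have expand p : bracket (w i p *: s i p) (S j) = \sum_(q < n | q != j) T p q.
  by rewrite bracket_sumr; apply: eq_bigr => q _; rewrite bracketZl bracketZr scalerA.
have row_j : \sum_(q < n | q != j) T j q = \sum_(k < n | (k != i) && (k != j)) T j k.
  rewrite (bigD1 i ij) /= {1}/T tpermC bracketxx scaler0 add0r.
  by apply: eq_bigl => q; rewrite andbC.
have row_k k : (k != i) && (k != j) -> \sum_(q < n | q != j) T k q = T k i + T k k.
  move=> /andP[ki kj]; rewrite (bigD1 i ij) (bigD1 k) /=; last by rewrite kj ki.
  rewrite big1 ?addr0 // => q /andP[/andP[_]]; rewrite ![q == _]eq_sym => iq kq.
  by rewrite /T bracket_s_s_disjoint ?scaler0.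
have cycle k : (k != i) && (k != j) -> T j k + (T k i + T k k) = 0.
  move=> /andP[]; rewrite ![k == _]eq_sym => ik jk.
  have [e1 e2 e3 e4] := tpermM_cycle3 ij jk ik.
  rewrite /T /bracket -!sigmaM (tpermC j i) e1 e2 e3 e4.
  rewrite -[sigma (_ * tperm i j)%g - _]opprB scalerN -scalerBl -scalerDl.
  suff -> : w i j * w j k + (w i k * w j i - w i k * w j k) = 0 by rewrite scale0r.
  rewrite (partial_fraction (z_neq _ _ ij) (z_neq _ _ ik) (z_neq _ _ jk)).
  rewrite -[z j - z i]opprB invrN; ring.
rewrite bracket_suml (eq_bigr _ (fun p _ => expand p)) (bigD1 j) /=; last first.
  by rewrite eq_sym.
rewrite row_j (eq_bigr _ row_k) -big_split /=.
by apply: big1 => k; exact: cycle.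
Qed.

Lemma kz_A_commute i j : bracket (kz_A i z) (kz_A j z) = 0.
Proof.
have [<-|ij] := eqVneq i j; first exact: bracketxx.
rewrite !kz_A_split !bracketBl !bracketBr !bracket_centrall // !bracket_centralr //.
rewrite bracket_P_P // bracket_P_S // bracket_S_P // bracket_S_S // !mulr0 subr0.
rewrite !mulr_sumr -!sumrB; apply: big1 => k _.
rewrite -!scalerAr -!scalerBl.
suff -> : a i k * a j k - a i k * w j i - w i j * a j k = 0 by rewrite scale0r.
rewrite (partial_fraction (z_neq _ _ ij) (z_neq_alpha i k) (z_neq_alpha j k)).
rewrite -[z j - z i]opprB invrN; ring.
Qed.

End AtPoint.
End KZCommutator.
Arguments kz_A {R B n m}.
Arguments kz_A_commute {R B n m nu sigma Y alpha}.

Section KZDomain.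
Variable R : realType.
Local Notation C := (Cplx R).
Variables (n m : nat) (alpha : 'I_m -> C).

Definition kz_domain : set ('I_n -> C) :=
  fun z => (forall i p : 'I_n, i != p -> z i != z p) /\
           (forall (i : 'I_n) (k : 'I_m), z i != alpha k).

Lemma kz_domain_line i z : kz_domain z -> \forall w \near z i, kz_domain (updz z i w).
Proof.
case=> z_neq z_alpha.
have near_z p : \forall w \near z i, p != i -> w != z p.
  have [->|pi] := eqVneq p i; first exact: filterS filterT.
  have ip : i != p by rewrite eq_sym.
  by apply: filterS (near_neq (z_neq _ _ ip)) => w wp _.
have near_alpha k : \forall w \near z i, w != alpha k by exact: near_neq.
apply: filterS (filterI (filter_forall _ near_z) (filter_forall _ near_alpha)).
move=> w [wz walpha].
split=> [p q pq | p k]; rewrite /updz; last first.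
  by have [_|_] := eqVneq p i; [exact: walpha | exact: z_alpha].
have [pi|pi] := eqVneq p i; have [qi|qi] := eqVneq q i.
- by rewrite pi qi eqxx in pq.
- exact: wz.
- by rewrite eq_sym wz.
- exact: z_neq.
Qed.

End KZDomain.
Arguments kz_domain {R n m}.
Arguments kz_domain_line {R n m}.

Section KZDerivative.
Variable R : realType.
Local Notation C := (Cplx R).
Variables (B : algType C) (n m : nat) (nu : B) (sigma : {perm 'I_n} -> B)
  (Y : 'I_n -> 'I_m -> B) (alpha : 'I_m -> C).
Local Notation s i j := (sigma (tperm i j)).
Local Notation U := (@kz_domain R n m alpha).

Definition kz_coef (j : 'I_n) (u : 'I_m + 'I_n) (z : 'I_n -> C) : C :=
  match u with
  | inl k => (z j - alpha k)^-1
  | inr p => if p != j then (z j - z p)^-1 else 0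
  end.

Definition kz_vec (j : 'I_n) (u : 'I_m + 'I_n) : B :=
  match u with inl k => Y j k | inr p => - (nu * s j p) end.

Definition kz_dA (i j : 'I_n) (z : 'I_n -> C) : B :=
  \sum_(c < m + n)
    pderiv (kz_coef j (fintype.split c)) i z *: kz_vec j (fintype.split c).

Lemma kz_A_lincomb j z :
  kz_A nu sigma Y alpha j z =
    \sum_(c < m + n) kz_coef j (fintype.split c) z *: kz_vec j (fintype.split c).
Proof.
rewrite /kz_A (sum_split_ord (fun u => kz_coef j u z *: kz_vec j u)) /= -sumrN.
congr (_ + _); rewrite big_mkcond; apply: eq_bigr => p _.
by case: ifP; rewrite ?scalerN ?scale0r ?oppr0.
Qed.

Lemma pderivable_kz_coef j u i z : U z -> pderivable (kz_coef j u) i z.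
Proof.
case=> z_neq z_alpha; have d_updz p : derivable (fun w => updz z i w p) (z i) 1.
  by rewrite /updz; case: eqP => _; [exact: derivable_id | exact: derivable_cst].
rewrite /pderivable; case: u => [k|p] /=.
  by apply: derivable_inv_sub; [exact: d_updz | exact: derivable_cst | rewrite updz_id].
case: eqVneq => [_|pj]; first exact: derivable_cst.
by apply: derivable_inv_sub; rewrite ?updz_id ?z_neq // eq_sym.
Qed.

Lemma is_pderiv_kz_A i j : is_pderiv U i (kz_A nu sigma Y alpha j) (kz_dA i j).
Proof.
exists (m + n), (fun c => kz_coef j (fintype.split c)).
exists (fun c => kz_vec j (fintype.split c)).
by move=> z Uz; split; [move=> c; exact: pderivable_kz_coef | exact: kz_A_lincomb |].
Qed.

Lemma kz_dA_offdiag i j z : i != j -> U z ->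
  kz_dA i j z = - ((z i - z j) ^- 2 *: (nu * s i j)).
Proof.
move=> ij [z_neq _]; have ji : j != i by rewrite eq_sym.
rewrite /kz_dA (sum_split_ord (fun u => pderiv (kz_coef j u) i z *: kz_vec j u)) /=.
rewrite big1 ?add0r => [|k _]; last first.
  by rewrite /pderiv /updz /= (negbTE ji) derive1_cst scale0r.
rewrite (bigD1 i) //= big1 ?addr0 => [|p pi]; last first.
  by rewrite /pderiv /updz /= (negbTE ji) (negbTE pi) derive1_cst scale0r.
rewrite /pderiv /= ij /updz eqxx (negbTE ji) derive1_inv_sub ?z_neq //.
by rewrite scalerN -[z j - z i]opprB sqrrN tpermC.
Qed.

Lemma kz_dA_sym i j z : U z -> kz_dA i j z = kz_dA j i z.
Proof.
move=> Uz; have [<-//|ij] := eqVneq i j.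
rewrite !kz_dA_offdiag // 1?eq_sym //.
by rewrite -[z j - z i]opprB sqrrN tpermC.
Qed.

End KZDerivative.
Arguments kz_dA {R B n m}.
Arguments is_pderiv_kz_A {R B n m}.
Arguments kz_dA_sym {R B n m} nu sigma Y {alpha i j z}.

Theorem lemma4p1 (R : realType) (B : algType (Cplx R)) (n m : nat)
  (d : 'I_m -> nat) (gamma : forall k : 'I_m, 'I_(d k) -> B) (nu : B)
  (sigma : {perm 'I_n} -> B) (Y : 'I_n -> 'I_m -> B) (alpha : 'I_m -> Cplx R) :
  (forall k, (0 < d k)%N) ->
  (* nu and the gamma_kj are central (they are the scalars of C[gamma,nu]) *)
  (forall x : B, nu * x = x * nu) ->
  (forall k j (x : B), gamma k j * x = x * gamma k j) ->
  (* S_n maps into B multiplicatively *)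
  sigma 1%g = 1 ->
  (forall p q : {perm 'I_n}, sigma (p * q)%g = sigma p * sigma q) ->
  (* defining relations of B_n, with s_ij = sigma (tperm i j) *)
  (forall (i j : 'I_n) k, i != j ->
     sigma (tperm i j) * Y i k = Y j k * sigma (tperm i j)) ->
  (forall (i j h : 'I_n) k, i != j -> h != i -> h != j ->
     sigma (tperm i j) * Y h k = Y h k * sigma (tperm i j)) ->
  (forall (i : 'I_n) (k : 'I_m), \prod_(j < d k) (Y i k - gamma k j) = 0) ->
  (forall i : 'I_n,
     \sum_(k < m) Y i k = nu * \sum_(j < n | j != i) sigma (tperm i j)) ->
  (forall (i j : 'I_n) k, i != j ->
     Y i k * Y j k - Y j k * Y i k = nu * (Y i k - Y j k) * sigma (tperm i j)) ->
  (forall (i j : 'I_n) (k l : 'I_m), i != j -> k != l ->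
     Y i k * Y j l = Y j l * Y i k) ->
  (* distinct alpha_k *)
  injective alpha ->
  let Acon (i : 'I_n) (z : 'I_n -> Cplx R) : B :=
    \sum_(k < m) (z i - alpha k)^-1 *: Y i k
    - \sum_(p < n | p != i) (z i - z p)^-1 *: (nu * sigma (tperm i p)) in
  let U : set ('I_n -> Cplx R) :=
    fun z => (forall i p : 'I_n, i != p -> z i != z p) /\
             (forall (i : 'I_n) (k : 'I_m), z i != alpha k) in
  forall i j : 'I_n,
    (exists D : ('I_n -> Cplx R) -> B, is_pderiv U i (Acon j) D) /\
    (forall Dij Dji : ('I_n -> Cplx R) -> B,
       is_pderiv U i (Acon j) Dij -> is_pderiv U j (Acon i) Dji ->
       forall z, U z ->
         Dij z - Dji z + (Acon i z * Acon j z - Acon j z * Acon i z) = 0).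
Proof.
move=> _ nu_central _ _ sigmaM s_Y_moved s_Y_fixed _ _ Y_bracket_leg Y_commute_legs _.
move=> Acon U i j.
have dA k l : is_pderiv U k (Acon l) (kz_dA nu sigma Y alpha k l).
  exact: is_pderiv_kz_A.
split=> [|Dij Dji dij dji z Uz]; first by eexists; exact: dA.
rewrite (is_pderiv_uniq (kz_domain_line alpha i) dij (dA i j) z Uz).
rewrite (is_pderiv_uniq (kz_domain_line alpha j) dji (dA j i) z Uz).
rewrite (kz_dA_sym nu sigma Y Uz) subrr add0r.
case: Uz => z_neq z_alpha.
exact: (kz_A_commute nu_central sigmaM s_Y_moved s_Y_fixed Y_bracket_leg Y_commute_legs
  z z_neq z_alpha).
Qed.
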